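(* Let $p$ be a prime and let $G$ be a finite Abelian $p$-group. Let $S$ be a normal sequence over $G$ with $|S|=\mathsf{D}(G)+i-1$, where $i\in\{1,2,\dots,p-1\}$. Then $S=0^iT$, i.e. $S$ consists of $i$ copies of the zero element $0\in G$ together with a sequence $T$ over $G$ that is zero-sumfree.
   Context: A sequence over a finite Abelian group $G$ (written additively) is a finite multiset of elements of $G$ (repetitions allowed, order disregarded); its length $|S|$ is the number of terms counted with multiplicity, and a subsequence is a sub-multiset. For $S=g_1\cdots g_\ell$, $\sigma(S)=\sum_i g_i$. $S$ is a zero-sum sequence if $\sigma(S)=0$; $S$ is zero-sumfree if no non-empty subsequence has sum $0$. The Davenport constant $\mathsf{D}(G)$ is the smallest positive integer $t$ such that every sequence over $G$ of length at least $t$ contains a non-empty zero-sum subsequence. A sequence $S$ over $G$ with $|S|\ge \mathsf{D}(G)$ is called normal if every zero-sum subsequence $S'$ of $S$ satisfies $|S'|\le |S|-\mathsf{D}(G)+1$. The notation $0^iT$ denotes the sequence obtained from $T$ by adjoining $i$ copies of $0$. *)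

From HB Require Import structures.
From mathcomp Require Import all_boot all_order all_algebra.
Set Implicit Arguments. Unset Strict Implicit. Unset Printing Implicit Defensive.
Import GRing.Theory.
Local Open Scope ring_scope.

(* A sequence over G (a finite multiset) is represented by a list [seq G];
   only its multiset content (counts) matters in everything below. *)

Definition sigma (G : finZmodType) (S : seq G) : G := \sum_(g <- S) g.

Definition submseq (G : finZmodType) (T S : seq G) : Prop :=
  forall x : G, (count_mem x T <= count_mem x S)%N.

Definition zero_sum (G : finZmodType) (S : seq G) : Prop := sigma S = 0.

Definition zero_sumfree (G : finZmodType) (S : seq G) : Prop :=
  forall T : seq G, submseq T S -> T != [::] -> sigma T != 0.

Definition davenport_prop (G : finZmodType) (t : nat) : Prop :=
  forall S : seq G, (t <= size S)%N ->
    exists T : seq G, [/\ submseq T S, T != [::] & zero_sum T].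

Definition is_davenport (G : finZmodType) (D : nat) : Prop :=
  [/\ (0 < D)%N, davenport_prop G D &
      forall t : nat, (0 < t)%N -> davenport_prop G t -> (D <= t)%N].

Definition normal_seq (G : finZmodType) (D : nat) (S : seq G) : Prop :=
  (D <= size S)%N /\
  forall S' : seq G, submseq S' S -> zero_sum S' -> (size S' <= size S - D + 1)%N.

From HB Require Import structures.
From mathcomp Require Import all_boot all_order all_algebra.
From mathcomp Require Import all_fingroup all_solvable zify ring.
Set Implicit Arguments. Unset Strict Implicit. Unset Printing Implicit Defensive.
Import GRing.Theory.
Local Open Scope ring_scope.

(* Write S = 0^z R with 0 \notin R.  Normality bounds the length of every
   zero-sum subsequence of S by i, so z <= i; if z < i, every zero-sum
   subsequence of R has length at most t = i - z, where |R| = D + t - 1 and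
   0 < t < p.  This is impossible.  Take a basis e_1, ..., e_r of G, so that
   D > L := \sum_j (ord e_j - 1).  In the group ring F_p[x][G], whose basis
   elements we write <g>, the elements 1 - <e_j> are nilpotent of index
   ord e_j (a power of p) and generate an ideal containing every 1 - <g>;
   hence the product of the x + (1 - <g>), g in R, is divisible by
   x^(|R| - L), a multiple of x^t.  Its coefficient at <0> is the sum of
   (-1)^|T| (x + 1)^(|R| - |T|) over the zero-sum subsequences T of R.  After
   removing the factor (x + 1)^(|R| - t), the coefficient of x^(t-1) is t: the
   empty T contributes t, no T has length 1, and longer T contribute nothing.
   So p divides t, a contradiction.  Hence z = i, and R is zero-sumfree since
   a nonempty zero-sum T in R would make 0^i T too long. *)

Section NilpotentSpan.

Variables (A : comNzRingType) (r : nat) (y : 'I_r -> A).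

Definition in_span (a : A) : Prop := exists cf : 'I_r -> A, a = \sum_j cf j * y j.

Lemma in_span_gen j : in_span (y j).
Proof.
exists (fun k => (k == j)%:R).
by rewrite (bigD1 j) //= eqxx mul1r big1 ?addr0 // => k /negbTE ->; rewrite mul0r.
Qed.

Lemma in_span0 : in_span 0.
Proof. by exists (fun=> 0); rewrite big1 // => j _; rewrite mul0r. Qed.

Lemma in_spanD a b : in_span a -> in_span b -> in_span (a + b).
Proof.
move=> [ca ->] [cb ->]; exists (fun j => ca j + cb j).
by rewrite -big_split; apply: eq_bigr => j _; rewrite mulrDl.
Qed.

Lemma in_spanMl c a : in_span a -> in_span (c * a).
Proof.
move=> [ca ->]; exists (fun j => c * ca j).
by rewrite big_distrr; apply: eq_bigr => j _; exact: mulrA.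
Qed.

Variable q : 'I_r -> nat.
Hypothesis yq : forall j, y j ^+ q j = 0.

Lemma monomial_eq0 (e : 'I_r -> nat) :
  (\sum_j (q j).-1 < \sum_j e j)%N -> \prod_j y j ^+ e j = 0.
Proof.
move=> lt_qe; have [j le_qe] : exists j, (q j <= e j)%N.
  apply/existsP; apply: contraLR lt_qe; rewrite negb_exists -leqNgt => /forallP lt_eq.
  by apply: leq_sum => j _; have := lt_eq j; rewrite -ltnNge; case: (q j).
by rewrite (bigD1 j) //= -(subnK le_qe) exprD yq mulr0 mul0r.
Qed.

(* Expanding the product, every monomial in the [y j] of total degree above
   [\sum_j (q j).-1] vanishes by pigeonhole; carrying the monomial [e] along
   makes the induction on [s] go through. *)
Lemma monomial_prod_addr_span (c : A) (s : seq A) (e : 'I_r -> nat) :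
  {in s, forall a, in_span a} ->
  exists B, (\prod_j y j ^+ e j) * \prod_(a <- s) (c + a)
            = c ^+ (size s + \sum_j e j - \sum_j (q j).-1) * B.
Proof.
elim: s e => [|a s IHs] e span_s.
  rewrite big_nil mulr1 add0n.
  have [le_eq|lt_qe] := leqP (\sum_j e j) (\sum_j (q j).-1).
    by exists (\prod_j y j ^+ e j); rewrite (eqP le_eq) expr0 mul1r.
  by exists 0; rewrite monomial_eq0 // mulr0.
have [cf ->] := span_s a (mem_head a s).
have {}span_s : {in s, forall b, in_span b}.
  by move=> b sb; apply: span_s; rewrite inE sb orbT.
set m := (size (a :: s) + _ - _)%N.
have [B0 def_B0] := IHs e span_s.
have /fin_all_exists[B def_B] j := IHs (fun k => e k + (k == j))%N span_s.
set m0 := (size s + _ - _)%N in def_B0.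
exists (c ^+ (m0.+1 - m) * B0 + \sum_j cf j * B j).
rewrite big_cons mulrDl !mulrDr; congr (_ + _).
  have le_m : (m <= m0.+1)%N by rewrite /m /m0 /=; lia.
  by rewrite [RHS]mulrA -exprD subnKC // exprS -mulrA -def_B0; ring.
rewrite big_distrl big_distrr big_distrr /=; apply: eq_bigr => j _.
have sum_ej : (size s + \sum_k (e k + (k == j)) - \sum_k (q k).-1 = m)%N.
  have delta_j : (\sum_k ((k == j) : nat) = 1)%N.
    by rewrite (bigD1 j) //= eqxx big1 // => k /negbTE ->.
  by rewrite big_split /= delta_j /m /=; lia.
have prod_ej : (\prod_k y k ^+ e k) * y j = \prod_k y k ^+ (e k + (k == j)).
  have delta_j : \prod_k y k ^+ (k == j) = y j.
    by rewrite (bigD1 j) //= eqxx expr1 big1 ?mulr1 // => k /negbTE ->.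
  by rewrite -delta_j -big_split; apply: eq_bigr => k _; rewrite exprD.
by rewrite -sum_ej [RHS]mulrCA -def_B -prod_ej; ring.
Qed.

Lemma prod_addr_span (c : A) (s : seq A) : {in s, forall a, in_span a} ->
  exists B, \prod_(a <- s) (c + a) = c ^+ (size s - \sum_j (q j).-1) * B.
Proof.
move=> span_s; have [B def_B] := @monomial_prod_addr_span c s (fun=> 0%N) span_s.
exists B; rewrite big1 ?mul1r in def_B; last by move=> j _; rewrite expr0.
by rewrite def_B sum_nat_const muln0 addn0.
Qed.

End NilpotentSpan.

Fixpoint masks (n : nat) : seq bitseq :=
  if n is n'.+1 then map (cons true) (masks n') ++ map (cons false) (masks n')
  else [:: [::]].

Lemma size_masks n m : m \in masks n -> size m = n.
Proof.
elim: n m => [|n IHn] m /=; first by rewrite inE => /eqP ->.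
by rewrite mem_cat => /orP[] /mapP[m' /IHn <- ->].
Qed.

Lemma count_masks_nil n : count (fun m => count id m == 0%N) (masks n) = 1%N.
Proof.
elim: n => //= n IHn; rewrite count_cat !count_map.
by rewrite (eq_count (a2 := pred0)) ?count_pred0.
Qed.

Definition zero_sum_sizes (G : finZmodType) (R : seq G) : seq nat :=
  [seq count id m | m <- masks (size R) & sigma (mask m R) == 0].

Lemma zero_sum_sizesP (G : finZmodType) (R : seq G) k : k \in zero_sum_sizes R ->
  exists T, [/\ submseq T R, zero_sum T & size T = k].
Proof.
case/mapP=> m; rewrite mem_filter => /andP[/eqP zs_m mR] ->.
exists (mask m R); split=> //; first by move=> g; apply: leq_count_mask.
by rewrite size_mask ?(size_masks mR).
Qed.

Lemma count_zero_sum_sizes0 (G : finZmodType) (R : seq G) :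
  count_mem 0%N (zero_sum_sizes R) = 1%N.
Proof.
rewrite count_map count_filter -(count_masks_nil (size R)).
apply: eq_in_count => m mR /=; case: eqP => //= cnt0.
have /size0nil -> : size (mask m R) = 0%N by rewrite size_mask ?(size_masks mR).
by rewrite /sigma big_nil eqxx.
Qed.

Lemma zero_sum_sizes_neq1 (G : finZmodType) (R : seq G) :
  0 \notin R -> 1%N \notin zero_sum_sizes R.
Proof.
move=> R0; apply/negP=> /zero_sum_sizesP[T [sub_T zs_T size_T]].
case: T size_T sub_T zs_T => [|a []] // _ sub_a zs_a.
move: zs_a R0; rewrite /zero_sum /sigma big_seq1 => <-; apply/negP/negPn.
by rewrite -has_pred1 has_count (leq_trans _ (sub_a a)) //= eqxx.
Qed.

Section GroupRing.

Variables (G : finZmodType) (F : comNzRingType).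

Definition group_ring : Type := {ffun G -> F}.
HB.instance Definition _ := GRing.Zmodule.on group_ring.

Definition gmul (f g : group_ring) : group_ring :=
  [ffun z => \sum_x f x * g (z - x)].
Definition gone : group_ring := [ffun z => (z == 0)%:R].

Fact gmulA : associative gmul.
Proof.
move=> f g h; apply/ffunP=> z; rewrite !ffunE.
under eq_bigr do rewrite ffunE big_distrr /=.
under [RHS]eq_bigr do rewrite ffunE big_distrl /=.
rewrite [RHS]exchange_big /=; apply: eq_bigr => x _.
rewrite [RHS](reindex_inj (addrI x)) /=; apply: eq_bigr => w _.
by rewrite mulrA (addrC x w) addrK opprD addrA (addrAC z).
Qed.

Fact gmulC : commutative gmul.
Proof.
move=> f g; apply/ffunP=> z; rewrite !ffunE.
rewrite (reindex_inj (can_inj (subKr z))) /=; apply: eq_bigr => x _.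
by rewrite subKr mulrC.
Qed.

Fact gmul1 : left_id gone gmul.
Proof.
move=> f; apply/ffunP=> z; rewrite !ffunE (bigD1 0) //= big1 => [|x /negbTE nx].
  by rewrite ffunE eqxx mul1r subr0 addr0.
by rewrite ffunE nx mul0r.
Qed.

Fact gmulDl : left_distributive gmul +%R.
Proof.
move=> f1 f2 g; apply/ffunP=> z; rewrite !ffunE -big_split.
by apply: eq_bigr => x _; rewrite !ffunE mulrDl.
Qed.

Fact gone_neq0 : gone != 0.
Proof. by apply/eqP=> /ffunP/(_ 0); rewrite !ffunE eqxx; apply/eqP/oner_neq0. Qed.

HB.instance Definition _ :=
  GRing.Zmodule_isComNzRing.Build group_ring gmulA gmulC gmul1 gmulDl gone_neq0.

Definition gX (a : G) : group_ring := [ffun z => (z == a)%:R].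
Definition gC (u : F) : group_ring := [ffun z => (z == 0)%:R * u].

Lemma gmulE (f g : group_ring) z : (f * g) z = \sum_x f x * g (z - x).
Proof. by rewrite ffunE. Qed.

Lemma gsubE (f g : group_ring) z : (f - g) z = f z - g z.
Proof. by rewrite !ffunE. Qed.

Lemma gXmulE a (f : group_ring) z : (gX a * f) z = f (z - a).
Proof.
rewrite gmulE (bigD1 a) //= big1 => [|x /negbTE nx].
  by rewrite ffunE eqxx mul1r addr0.
by rewrite ffunE nx mul0r.
Qed.

Lemma gCmulE u (f : group_ring) z : (gC u * f) z = u * f z.
Proof.
rewrite gmulE (bigD1 0) //= big1 => [|x /negbTE nx].
  by rewrite ffunE eqxx mul1r subr0 addr0.
by rewrite ffunE nx !mul0r.
Qed.

Lemma gCexpmulE u n (f : group_ring) z : (gC u ^+ n * f) z = u ^+ n * f z.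
Proof.
elim: n f => [|n IHn] f; first by rewrite !expr0 !mul1r.
by rewrite exprS -mulrA gCmulE IHn mulrA -exprS.
Qed.

Lemma gCD u v : gC (u + v) = gC u + gC v.
Proof. by apply/ffunP=> z; rewrite !ffunE mulrDr. Qed.

Lemma gC1 : gC 1 = 1.
Proof. by apply/ffunP=> z; rewrite !ffunE mulr1. Qed.

Lemma gXD a b : gX (a + b) = gX a * gX b.
Proof. by apply/ffunP=> z; rewrite gXmulE !ffunE subr_eq addrC. Qed.

Lemma gX0 : gX 0 = 1.
Proof. by apply/ffunP=> z; rewrite !ffunE. Qed.

Lemma gXMn a n : gX (a *+ n) = gX a ^+ n.
Proof.
elim: n => [|n IHn]; first by rewrite mulr0n gX0.
by rewrite mulrS exprS gXD IHn.
Qed.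

Lemma pchar_group_ring p : p \in [pchar F] -> p \in [pchar group_ring].
Proof.
case/andP=> p_pr /eqP p0; rewrite inE p_pr /=; apply/eqP/ffunP=> z.
by rewrite ffunMnE !ffunE; case: (z == 0) => /=; [exact: p0 | exact: mul0rn].
Qed.

Lemma subr_gX_nilpotent p (a : G) n : p \in [pchar F] -> p.-nat n ->
  a *+ n = 0 -> (1 - gX a) ^+ n = 0.
Proof.
move=> pF p_n an0.
have pchar_n : [pchar group_ring].-nat n.
  by rewrite (eq_pnat _ (pcharf_eq (pchar_group_ring pF))).
rewrite exprDn_pchar // expr1n exprNn -gXMn an0 gX0 mulr1.
have : (1 + (-1)) ^+ n = 0 :> group_ring.
  by rewrite subrr expr0n; case: eqP p_n => // ->.
by rewrite exprDn_pchar // expr1n.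
Qed.

Lemma subr_gX_span r (x : 'I_r -> G) (k : 'I_r -> nat) :
  in_span (fun j => 1 - gX (x j)) (1 - gX (\sum_j x j *+ k j)).
Proof.
set y := fun j => 1 - gX (x j).
have span_sum a b : in_span y (1 - gX a) -> in_span y (1 - gX b) ->
    in_span y (1 - gX (a + b)).
  have -> : 1 - gX (a + b) = (1 - gX a) + gX a * (1 - gX b).
    by rewrite mulrBr mulr1 gXD addrA subrK.
  by move=> ya yb; apply: in_spanD ya (in_spanMl _ yb).
have span_0 : in_span y (1 - gX 0) by rewrite gX0 subrr; apply: in_span0.
apply: (big_ind (fun a => in_span y (1 - gX a))) => // j _.
elim: (k j) => [|n IHn]; first by rewrite mulr0n.
by rewrite mulrS; apply: span_sum IHn; apply: in_span_gen.
Qed.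

Lemma coef_prod_gC_subr_gX (u : F) (R : seq G) z :
  (\prod_(g <- R) (gC u - gX g)) z =
  \sum_(m <- masks (size R))
     (sigma (mask m R) == z)%:R * ((-1) ^+ count id m * u ^+ (size R - count id m)).
Proof.
elim: R z => [|a R IHR] z.
  rewrite big_nil /= big_cons big_nil ffunE /sigma big_nil.
  by rewrite addr0 expr0 subn0 expr0 !mulr1 eq_sym.
rewrite big_cons mulrBl gsubE gCmulE gXmulE !IHR /= big_cat !big_map /=.
rewrite [LHS]addrC -sumrN; congr (_ + _).
  apply: eq_bigr => m _; rewrite /sigma /= big_cons add1n.
  rewrite subSS exprS mulN1r mulNr mulrN; congr (- (_ * _)).
  by rewrite (eq_sym (a + _)) eq_sym subr_eq addrC.
rewrite big_distrr /= big_seq_cond [RHS]big_seq_cond; apply: eq_bigr => m /andP[mR _].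
rewrite add0n subSn; last by rewrite -(size_masks mR) count_size.
by rewrite exprS mulrCA; congr (_ * _); rewrite mulrCA.
Qed.

Lemma coef0_prod_gC_subr_gX (u : F) (R : seq G) :
  (\prod_(g <- R) (gC u - gX g)) 0
    = \sum_(k <- zero_sum_sizes R) (-1) ^+ k * u ^+ (size R - k).
Proof.
rewrite coef_prod_gC_subr_gX big_map big_filter [RHS]big_mkcond.
by apply: eq_bigr => m _; case: eqP; rewrite ?mul1r ?mul0r.
Qed.

End GroupRing.

Definition zmod_spanning (G : finZmodType) r (x : 'I_r -> G) : Prop :=
  forall g, exists k : 'I_r -> nat, g = \sum_j x j *+ k j.

Definition zmod_independent (G : finZmodType) r (x : 'I_r -> G) : Prop :=
  forall k : 'I_r -> nat, (forall j, k j < #[x j]%g)%N ->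
    \sum_j x j *+ k j = 0 -> forall j, k j = 0%N.

Lemma zmod_basis (G : finZmodType) : exists r (x : 'I_r -> G),
  [/\ forall j, (1 < #[x j]%g)%N, zmod_spanning x & zmod_independent x].
Proof.
have [b defG typeG] := abelian_structure (FinRing.zmod_abelian [set: G]).
pose x (j : 'I_(size b)) := nth 0 b j.
have {}defG : \big[dprod/1%g]_(j < size b) <[x j]>%g = [set: G].
  by rewrite -defG (big_nth 0) big_mkord.
exists (size b), x; split.
- move=> j; have := abelian_type_gt1 [set: G]; rewrite -typeG.
  by move/allP; apply; apply: map_f; apply: mem_nth.
- move=> g; have [c [cx -> _]] := mem_bigdprod defG (in_setT g).
  have /fin_all_exists[k def_c] j : exists n, c j = (x j ^+ n)%g by apply/cycleP/cx.
  by exists k; apply: eq_bigr => j _; rewrite def_c.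
move=> k lt_k sum0 j.
have [c [_ _ uniq_c]] := mem_bigdprod defG (group1 [set: G]).
have c1 i : c i = 1%g.
  by symmetry; apply: (uniq_c (fun=> 1%g)); rewrite ?big1.
(* Products in the additive group [G] are its sums, so [sum0] closes a side goal. *)
have xk1 : (x j ^+ k j)%g = 1%g.
  rewrite -(c1 j); apply: (uniq_c (fun i => x i ^+ k i)%g) => // i _.
  exact: mem_cycle.
by apply/eqP; move/eqP: xk1; rewrite -order_dvdn /dvdn modn_small.
Qed.

Section IndependentFamily.

Variables (G : finZmodType) (r : nat) (x : 'I_r -> G).
Hypotheses (x_gt1 : forall j, (1 < #[x j]%g)%N) (x_free : zmod_independent x).

(* If [x i = x j] with [i != j], then [x i + (#[x j] - 1) x j = 0] is a
   nontrivial relation. *)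
Lemma independent_inj : injective x.
Proof.
move=> i j eq_x; apply/eqP/negP=> /negP neq_ij.
pose k l := ((l == i) + (l == j) * (#[x j]%g).-1)%N.
have k_lt l : (k l < #[x l]%g)%N.
  rewrite /k; have := x_gt1 l.
  case: (eqVneq l i) => [->|_]; first by rewrite (negbTE neq_ij) /=; lia.
  by case: eqP => [->|_] /=; lia.
have : k i = 0%N.
  apply: x_free => //; rewrite (bigD1 i) //= (bigD1 j) 1?eq_sym //=.
  rewrite big1 => [|l /andP[nli nlj]].
    rewrite /k !eqxx (negbTE neq_ij) eq_sym (negbTE neq_ij) /= addr0 add0n mul1n.
    rewrite eq_x -mulrnDr mul0n addn0 add1n prednK ?order_gt0 //.
    by rewrite -FinRing.zmodXgE expg_order.
  by rewrite /k (negbTE nli) (negbTE nlj).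
by rewrite /k eqxx (negbTE neq_ij).
Qed.

Lemma sigma_count_independent (T : seq G) : {subset T <= codom x} ->
  sigma T = \sum_j x j *+ count_mem (x j) T.
Proof.
elim: T => [|a T IHT] T_x.
  by rewrite /sigma big_nil big1 // => j _; rewrite mulr0n.
have /codomP[i ->] := T_x a (mem_head a T).
rewrite /sigma big_cons -/(sigma T) IHT => [|g Tg]; last first.
  by apply: T_x; rewrite inE Tg orbT.
under [RHS]eq_bigr do rewrite /= mulrnDr.
rewrite big_split /= [X in _ = X + _](bigD1 i) //= eqxx mulr1n -addrA.
congr (_ + _); rewrite [X in _ = X + _]big1 ?add0r // => j nji.
by rewrite (inj_eq independent_inj) eq_sym (negbTE nji).
Qed.

(* The sequence made of [#[x j] - 1] copies of each [x j] is zero-sum free. *)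
Lemma davenport_gt_independent D :
  davenport_prop G D -> (\sum_j (#[x j]%g).-1 < D)%N.
Proof.
move=> daven_D; rewrite ltnNge; apply/negP => le_D.
pose Z := flatten [seq nseq (#[x j]%g).-1 (x j) | j <- enum 'I_r].
have size_Z : size Z = (\sum_j (#[x j]%g).-1)%N.
  rewrite size_flatten /shape -map_comp sumnE big_map big_enum.
  by apply: eq_bigr => j _; rewrite /= size_nseq.
have count_Z j : count_mem (x j) Z = (#[x j]%g).-1.
  rewrite count_flatten -map_comp sumnE big_map big_enum /= (bigD1 j) //=.
  rewrite count_nseq /= eqxx mul1n big1 ?addn0 // => l njl.
  by rewrite count_nseq /= (inj_eq independent_inj) (negbTE njl).
have [T [sub_T nnil_T zs_T]] := daven_D Z (leq_trans le_D (eq_leq (esym size_Z))).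
have T_x : {subset T <= codom x}.
  move=> g Tg; have : g \in Z.
    by rewrite -has_pred1 has_count (leq_trans _ (sub_T g)) // -has_count has_pred1.
  by move=> /flattenP[_ /mapP[j _ ->] /nseqP[-> _]]; apply: codom_f.
have T0 j : count_mem (x j) T = 0%N.
  apply: (x_free (k := fun j => count_mem (x j) T)) => [l|].
    by rewrite (leq_ltn_trans (sub_T _)) // count_Z prednK ?order_gt0.
  by rewrite -sigma_count_independent.
case: T nnil_T sub_T zs_T T_x T0 => // a T _ _ _ T_x T0.
by have /codomP[j def_a] := T_x a (mem_head a T); have := T0 j; rewrite /= -def_a eqxx.
Qed.

End IndependentFamily.

Lemma prod_gC_subr_gX_dvd p (G : finZmodType) (F : comNzRingType) r (x : 'I_r -> G)
    (c : F) (R : seq G) :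
  p \in [pchar F] -> p.-nat #|G| -> zmod_spanning x ->
  exists B, \prod_(g <- R) (gC G (c + 1) - gX F g)
            = gC G c ^+ (size R - \sum_j (#[x j]%g).-1) * B.
Proof.
move=> pF pG x_span.
have nil_x j : (1 - gX F (x j)) ^+ #[x j]%g = 0.
  apply: (subr_gX_nilpotent pF); last by rewrite -FinRing.zmodXgE expg_order.
  by apply: pnat_dvd pG; rewrite -cardsT order_dvdG ?inE.
have span_R : {in map (fun g => 1 - gX F g) R,
    forall a, in_span (fun j => 1 - gX F (x j)) a}.
  by move=> _ /mapP[g _ ->]; have [k ->] := x_span g; apply: subr_gX_span.
have [B def_B] := prod_addr_span nil_x (gC G c) span_R.
exists B; rewrite -(size_map (fun g => 1 - gX F g)) -def_B big_map.
by apply: eq_bigr => g _; rewrite gCD gC1 addrA.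
Qed.

Lemma coef_XaddC1_exp (R : nzRingType) k i :
  (('X + 1) ^+ k)`_i = 'C(k, i)%:R :> R.
Proof.
elim: k i => [|k IHk] i; first by rewrite expr0 coef1 bin0n; case: i.
rewrite exprSr mulrDr mulr1 coefD coefMX.
by case: i => [|i] /=; rewrite !IHk ?add0r ?bin0 // binS natrD addrC.
Qed.

(* Only the terms with [k = 0] reach degree [t.-1] in [('X + 1) ^+ (t - k)]. *)
Lemma signed_sum_XaddC1_dvd (F : fieldType) (t N : nat) (ks : seq nat) :
  (t <= N)%N -> count_mem 0%N ks = 1%N ->
  (forall k, k \in ks -> k != 1%N /\ (k <= t)%N) ->
  ('X^t : {poly F}) %| \sum_(k <- ks) (-1) ^+ k * ('X + 1) ^+ (N - k) -> t%:R = 0 :> F.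
Proof.
case: t => // t le_tN ks0 ks_ok.
pose E : {poly F} := \sum_(k <- ks) (-1) ^+ k * ('X + 1) ^+ (t.+1 - k).
have -> : \sum_(k <- ks) (-1) ^+ k * ('X + 1) ^+ (N - k)
          = ('X + 1) ^+ (N - t.+1) * E :> {poly F}.
  rewrite big_distrr /=; apply: eq_big_seq => k /ks_ok[_ le_kt].
  by rewrite mulrCA -exprD; congr (_ * _ ^+ _); lia.
have coprime_XaddC1 : coprimep ('X^(t.+1) : {poly F}) (('X + 1) ^+ (N - t.+1)).
  apply/coprimep_expr/coprimep_expl.
  by rewrite coprimep_sym coprimepX /root hornerD hornerX hornerC add0r oner_neq0.
rewrite mulrC Gauss_dvdpl // => /dvdpP[W def_E].
have coef_term k : k \in ks ->
    ((-1) ^+ k * ('X + 1) ^+ (t.+1 - k))`_t = (k == 0%N)%:R * t.+1%:R :> F.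
  move=> /ks_ok[]; case: k => [|[|k]] // _ le_kt.
    by rewrite expr0 mul1r subn0 coef_XaddC1_exp binSn mul1r.
  have coef_t : (('X + 1) ^+ (t.+1 - k.+2))`_t = 0 :> F.
    by rewrite coef_XaddC1_exp bin_small //; lia.
  rewrite mul0r -signr_odd /=.
  by case: (odd k); rewrite ?expr1 ?expr0 ?mulN1r ?mul1r ?coefN coef_t ?oppr0.
have := congr1 (fun P : {poly F} => P`_t) def_E.
rewrite /= coefMXn ltnSn coef_sum (eq_big_seq _ coef_term) -big_distrl /=.
by rewrite -natr_sum -big_mkcond sum1_count ks0 mul1r => <-.
Qed.

Lemma long_zero_sum_subseq p (G : finZmodType) D (R : seq G) t :
  prime p -> p.-nat #|G| -> davenport_prop G D -> 0 \notin R ->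
  size R = (D + t - 1)%N -> (0 < t < p)%N ->
  exists T, [/\ submseq T R, zero_sum T & (t < size T)%N].
Proof.
move=> p_pr pG daven_D R0 size_R /andP[t_gt0 t_lt_p].
suff [k /zero_sum_sizesP[T [sub_T zs_T <-]] lt_tk] :
    exists2 k, k \in zero_sum_sizes R & (t < k)%N by exists T.
apply/hasP/negPn/negP => /hasPn short_R.
have [r [x [x_gt1 x_span x_free]]] := zmod_basis G.
have lt_LD := davenport_gt_independent x_gt1 x_free daven_D.
have pF : p \in [pchar {poly 'F_p}] by rewrite pchar_poly pchar_Fp.
have [B def_B] := prod_gC_subr_gX_dvd 'X R pF pG x_span.
have /negP[] : t%:R != 0 :> 'F_p.
  by rewrite -(inj_eq val_inj) /= val_Fp_nat // modn_small ?lt_t_p //; lia.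
apply/eqP/(signed_sum_XaddC1_dvd (N := size R) (ks := zero_sum_sizes R)).
- by lia.
- exact: count_zero_sum_sizes0.
- move=> k ks_k; split; last by rewrite leqNgt short_R.
  by apply: contraNneq (zero_sum_sizes_neq1 R0) => <-.
rewrite -(coef0_prod_gC_subr_gX ('X + 1) R) def_B gCexpmulE.
by rewrite dvdp_mulr // dvdp_exp2l //; lia.
Qed.

Lemma sigma_cat_nseq0 (G : finZmodType) (T : seq G) k :
  sigma (T ++ nseq k (0 : G)) = sigma T.
Proof. by rewrite /sigma big_cat /= big_nseq iter_addr_0 mul0rn addr0. Qed.

Lemma submseq_cat_nseq0 (G : finZmodType) (S T : seq G) k :
  submseq T [seq g <- S | g != 0 :> G] -> (k <= count_mem (0%R : G) S)%N ->
  submseq (T ++ nseq k (0 : G)) S.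
Proof.
move=> sub_T le_k g; have := sub_T g; rewrite count_cat count_nseq count_filter /=.
case: (eqVneq g 0) => [->|nz_g].
  rewrite (@eq_count _ (predI (pred1 0) (fun h : G => h != 0)) pred0) ?count_pred0.
    by rewrite leqn0 mul1n => /eqP ->.
  by move=> h /=; rewrite andbN.
rewrite mul0n addn0 (@eq_count _ (predI (pred1 g) (fun h : G => h != 0)) (pred1 g)) //.
by move=> h /=; case: eqP => [->|] //=; rewrite nz_g.
Qed.

Lemma perm_nseq_count_filter (T : eqType) (x : T) (s : seq T) :
  perm_eq s (nseq (count_mem x s) x ++ [seq y <- s | y != x]).
Proof.
have -> : nseq (count_mem x s) x = [seq y <- s | y == x].
  by rewrite -size_filter; apply/esym/all_pred1P/filter_all.
by rewrite perm_sym perm_filterC.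
Qed.

Lemma count_mem_add_size_filter (T : eqType) (x : T) (s : seq T) :
  (count_mem x s + size [seq y <- s | y != x])%N = size s.
Proof. by rewrite size_filter -(count_predC (pred1 x)). Qed.

Theorem theorem2p1 (p : nat) (G : finZmodType) (D : nat) (S : seq G) (i : nat) :
  prime p -> p.-nat #|G| ->
  is_davenport G D ->
  normal_seq D S ->
  size S = (D + i - 1)%N ->
  (1 <= i <= p - 1)%N ->
  exists T : seq G, perm_eq S (nseq i 0 ++ T) /\ zero_sumfree T.
Proof.
move=> p_pr pG [_ daven_D _] [_ normal_S] size_S /andP[i_gt0 i_lt_p].
pose R := [seq g <- S | g != 0 :> G].
pose z := count_mem (0 : G) S.
have short_R T : submseq T R -> zero_sum T -> (size T + z <= i)%N.
  move=> sub_T zs_T; have zs_T0 : zero_sum (T ++ nseq z 0).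
    by rewrite /zero_sum sigma_cat_nseq0.
  have := normal_S _ (submseq_cat_nseq0 sub_T (leqnn z)) zs_T0.
  by rewrite size_cat size_nseq; lia.
have zeros_i : z = i.
  apply/eqP; rewrite eqn_leq; apply/andP; split.
    by have := short_R [::] (fun g => leq0n _) (big_nil _ _ _ _).
  rewrite leqNgt; apply/negP => lt_z_i.
  have R0 : 0 \notin R by rewrite mem_filter eqxx.
  have size_R : size R = (D + (i - z) - 1)%N.
    have size_SR : (z + size R = size S)%N := count_mem_add_size_filter 0 S.
    lia.
  have t_bounds : (0 < i - z < p)%N by lia.
  have [T [sub_T zs_T lt_T]] := long_zero_sum_subseq p_pr pG daven_D R0 size_R t_bounds.
  by have := short_R T sub_T zs_T; lia.
exists R; split; first by rewrite -zeros_i perm_nseq_count_filter.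
move=> U sub_U; apply: contra_neqN => zs_U; apply/nilP.
rewrite /nilp -leqn0 -(leq_add2r i).
by have := short_R U sub_U (eqP zs_U); rewrite zeros_i.
Qed.
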